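(* Let $a=(a_2,\dots,a_k)$ be nonnegative integers with $\sum_{i=2}^k ia_i=2^t$ for some $t\ge 1$. Then \[ \binom{|a|}{a}\equiv\sum_{j=1}^{\lfloor k/2\rfloor}\binom{|a|-1}{\hat a_{2j}}\pmod 2 . \]
   Context: $|a|=a_2+\dots+a_k$, $\binom{|a|}{a}=\frac{|a|!}{a_2!\cdots a_k!}$, $\hat a_j=(a_2,\dots,a_j-1,\dots,a_k)$; the multinomial coefficient of a tuple with a negative entry is defined to be $0$. *)

From mathcomp Require Import all_boot.
Set Implicit Arguments. Unset Strict Implicit. Unset Printing Implicit Defensive.

(* A tuple a = (a_2,...,a_k) is represented by a function a : nat -> nat;
   only the values a 2, ..., a k are used. *)

Definition tsize (k : nat) (a : nat -> nat) : nat := \sum_(2 <= i < k.+1) a i.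

Definition multinom (k : nat) (a : nat -> nat) : nat :=
  (tsize k a)`! %/ \prod_(2 <= i < k.+1) (a i)`!.

(* multinomial coefficient of hat a_j = (a_2,...,a_j - 1,...,a_k);
   it is 0 when a_j - 1 is negative (i.e. a_j = 0). Its top entry is
   |hat a_j| = |a| - 1. *)
Definition multinom_hat (k : nat) (a : nat -> nat) (j : nat) : nat :=
  if a j == 0 then 0
  else multinom k (fun i => if i == j then (a i).-1 else a i).

From Pilot Require Import Defs.
From mathcomp Require Import all_boot zify.

Set Implicit Arguments.
Unset Strict Implicit.
Unset Printing Implicit Defensive.

(* With n = |a|, M = multinom k a and H_j = multinom_hat k a j, lowering a_j by
   one gives H_j * n = M * a_j. Summing with weights 1 and j yields M = sum_j H_j
   and (sum_j j H_j) * n = M * 2^t. Since 0 < n < 2^t, the sum sum_j j H_j, hence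
   the sum of the H_j over odd j, is even, so M = sum_j H_j is congruent to the
   sum of the H_j over even j. *)

Lemma dvdn_prod_fact_sum (I : Type) (r : seq I) (a : I -> nat) :
  \prod_(i <- r) (a i)`! %| (\sum_(i <- r) a i)`!.
Proof.
elim: r => [|x r IH]; first by rewrite !big_nil.
rewrite !big_cons; set S := \sum_(i <- r) a i.
have <- : 'C(a x + S, S) * (S`! * (a x)`!) = (a x + S)`!.
  by have := @bin_fact (a x + S) S (leq_addl _ _); rewrite addnK.
by rewrite mulnC dvdn_mull // dvdn_mul.
Qed.

Lemma multinomK (k : nat) (a : nat -> nat) :
  multinom k a * \prod_(2 <= i < k.+1) (a i)`! = (Defs.tsize k a)`!.
Proof. by rewrite /multinom divnK // dvdn_prod_fact_sum. Qed.

Definition decr_at (a : nat -> nat) (j : nat) : nat -> nat :=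
  fun i => if i == j then (a i).-1 else a i.

Section DecrAt.

Variables (r : seq nat) (a : nat -> nat) (j : nat).
Hypotheses (r_uniq : uniq r) (j_in_r : j \in r) (aj_gt0 : 0 < a j).

Let decr_at_eq (F : nat -> nat) (op : SemiGroup.com_law nat) (x : nat) :
  \big[op/x]_(i <- r | i != j) F (decr_at a j i) =
  \big[op/x]_(i <- r | i != j) F (a i).
Proof. by apply: eq_bigr => i /negbTE; rewrite /decr_at => ->. Qed.

Lemma sum_decr_at : \sum_(i <- r) a i = (\sum_(i <- r) decr_at a j i).+1.
Proof.
rewrite !(bigD1_seq j) //= (decr_at_eq id) /decr_at eqxx.
by rewrite -addSn prednK.
Qed.

Lemma prod_fact_decr_at :
  \prod_(i <- r) (a i)`! = a j * \prod_(i <- r) (decr_at a j i)`!.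
Proof.
rewrite !(bigD1_seq j) //= (decr_at_eq factorial) /decr_at eqxx.
by rewrite mulnA -{2}(prednK aj_gt0) -factS prednK.
Qed.

End DecrAt.

Lemma multinom_hat_tsize (k : nat) (a : nat -> nat) (j : nat) : 2 <= j <= k ->
  multinom_hat k a j * Defs.tsize k a = multinom k a * a j.
Proof.
move=> j_range; rewrite /multinom_hat; case: eqP => [->|/eqP]; first by rewrite muln0.
rewrite -lt0n => aj_gt0; set b := decr_at a j.
have j_in : j \in index_iota 2 k.+1 by rewrite mem_index_iota ltnS.
have Pb_gt0 : 0 < \prod_(2 <= i < k.+1) (b i)`!.
  by apply: prodn_gt0 => i; apply: fact_gt0.
have := multinomK k a; rewrite /Defs.tsize (sum_decr_at (iota_uniq _ _) j_in aj_gt0).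
rewrite (prod_fact_decr_at (iota_uniq _ _) j_in aj_gt0) factS -(multinomK k b).
rewrite !mulnA => /eqP; rewrite eqn_pmul2r // => /eqP ->.
by rewrite mulnC.
Qed.

Lemma weighted_sum_multinom_hat (k : nat) (a w : nat -> nat) :
  \sum_(2 <= j < k.+1) w j * multinom_hat k a j * Defs.tsize k a =
  multinom k a * \sum_(2 <= j < k.+1) w j * a j.
Proof.
rewrite big_distrr /=; apply: eq_big_nat => j j_range.
by rewrite -mulnA multinom_hat_tsize 1?mulnCA // -ltnS.
Qed.

Lemma multinom_sum_hat (k : nat) (a : nat -> nat) : 0 < Defs.tsize k a ->
  multinom k a = \sum_(2 <= j < k.+1) multinom_hat k a j.
Proof.
move=> n_gt0; apply/eqP; rewrite -(eqn_pmul2r n_gt0) big_distrl /=.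
have := weighted_sum_multinom_hat k a (fun=> 1).
under eq_bigr do rewrite mul1n.
under [X in _ = _ * X -> _]eq_bigr do rewrite mul1n.
by move=> ->.
Qed.

Lemma leq_weighted_sum_l (m n : nat) (a : nat -> nat) :
  m * \sum_(m <= i < n) a i <= \sum_(m <= i < n) i * a i.
Proof.
rewrite big_distrr /= big_nat_cond [leqRHS]big_nat_cond; apply: leq_sum => i.
by case/andP=> /andP[mi _] _; rewrite leq_mul2r mi orbT.
Qed.

Lemma leq_weighted_sum_r (m n : nat) (a : nat -> nat) :
  \sum_(m <= i < n.+1) i * a i <= n * \sum_(m <= i < n.+1) a i.
Proof.
rewrite big_distrr /= big_nat_cond [leqRHS]big_nat_cond; apply: leq_sum => i.
by case/andP=> /andP[_ ni] _; rewrite leq_mul2r -ltnS ni orbT.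
Qed.

Lemma even_cofactor_pow2 (X M n t : nat) :
  0 < n < 2 ^ t -> X * n = M * 2 ^ t -> ~~ odd X.
Proof.
case/andP=> n_gt0 n_lt XnE; apply/negP => X_odd.
have : 2 ^ t %| n.
  rewrite -(@Gauss_dvdr _ X) ?XnE ?dvdn_mull //.
  by apply: coprimeXl; rewrite coprime2n.
by move/(dvdn_leq n_gt0); rewrite leqNgt n_lt.
Qed.

Lemma odd_sum_even_part (r : seq nat) (F : nat -> nat) :
  odd (\sum_(i <- r) F i) =
  odd (\sum_(i <- r) i * F i) (+) odd (\sum_(i <- r | ~~ odd i) F i).
Proof.
elim: r => [|x r IH]; first by rewrite !big_nil.
rewrite !big_cons !oddD oddM IH.
by case: (odd x); rewrite /= ?oddD; [apply: addbA | apply: addbCA].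
Qed.

Lemma sum_even_index (F : nat -> nat) (k : nat) :
  \sum_(2 <= j < k.+1 | ~~ odd j) F j = \sum_(1 <= j < (k./2).+1) F (2 * j).
Proof.
elim: k => [|k IH]; first by rewrite !big_geq.
case: k IH => [|k] IH; first by rewrite !big_geq.
rewrite big_mkcond big_nat_recr // -big_mkcond IH -uphalfE uphalf_half /= !negbK.
have hk := odd_double_half k.
case: (odd k) hk => /= hk; first by rewrite add1n addn0.
rewrite add0n [in RHS]big_nat_recr //; congr (_ + F _).
by move: hk; rewrite add0n -muln2; lia.
Qed.

Theorem mainTheorem7 (k t : nat) (a : nat -> nat) :
  1 <= t ->
  \sum_(2 <= i < k.+1) i * a i = 2 ^ t ->
  multinom k a = \sum_(1 <= j < (k./2).+1) multinom_hat k a (2 * j) %[mod 2].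
Proof.
move=> _ weightE; set n := Defs.tsize k a.
have n_lo : 2 * n <= 2 ^ t by rewrite -weightE leq_weighted_sum_l.
have n_hi : 2 ^ t <= k * n by rewrite -weightE leq_weighted_sum_r.
have n_gt0 : 0 < n.
  by move: (leq_trans (expn_gt0 2 t) n_hi); rewrite muln_gt0 => /andP[].
have X_even : ~~ odd (\sum_(2 <= j < k.+1) j * multinom_hat k a j).
  apply: (@even_cofactor_pow2 _ (multinom k a) n t); first by rewrite n_gt0; lia.
  by rewrite -weightE big_distrl; apply: (weighted_sum_multinom_hat k a id).
rewrite !modn2 -sum_even_index (multinom_sum_hat n_gt0) odd_sum_even_part.
by rewrite (negbTE X_even).
Qed.
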